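(* Let $M$ be a $\lambda$-term and $\vec x=\langle x_1,\dots,x_n\rangle$ a list of distinct variables with $FV(M)\subseteq\vec x$. There is a natural isomorphism of functors $((SD)^n)^{o}\times D\to\mathrm{Set}$ \[\llbracket M\rrbracket_{\vec x}\cong T_D(M)_{\vec x}.\]
   Context: $[n]=\{1,\dots,n\}$. Fix a class $\mathcal C$ of functions between finite ordinals equal to one of: all bijections, all injections, all surjections, all functions. For a small category $X$, $SX$ is the category whose objects are finite lists of objects of $X$ and whose morphisms $\langle x_1,\dots,x_n\rangle\to\langle y_1,\dots,y_m\rangle$ are $\langle\alpha,f_1,\dots,f_m\rangle$ with $\alpha:[m]\to[n]$ in $\mathcal C$, $f_i:x_{\alpha(i)}\to y_i$; composite of $\langle\alpha,\vec f\rangle$ then $\langle\beta,\vec g\rangle$ is $\langle\alpha\circ\beta,(g_i\circ f_{\beta(i)})_i\rangle$; tensor $\oplus$ is concatenation, unit $\langle\rangle$. Types: fix a small category $A$. $D=D_A$ is the colimit of $D_0=A$, $D_{k+1}=(SD_k)^{o}\times D_k\sqcup A$ along the canonical inclusions. Concretely its objects are $a::=o\mid\langle a_1,\dots,a_k\rangle\Rightarrow a$ ($o\in\mathrm{Ob}(A)$); its morphisms are those of $A$ between atoms, and $\langle\alpha,\vec f\rangle\Rightarrow f:(\vec a\Rightarrow a)\to(\vec a'\Rightarrow a')$ for $\langle\alpha,\vec f\rangle:\vec a'\to\vec a$ in $SD$ and $f:a\to a'$ in $D$ (composed componentwise); no others. $SD:=S(D_A)$. Contexts are objects $\Delta=\langle\vec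 a_1,\dots,\vec a_n\rangle$ of $(SD)^n$, written $x_1:\vec a_1,\dots,x_n:\vec a_n$; $\Gamma\otimes\Delta$ is componentwise concatenation; $\Delta\oplus\langle\vec a\rangle$ appends a component. For contexts $\Gamma_1,\dots,\Gamma_k$ and $\alpha:[k']\to[k]$ in $\mathcal C$, $\alpha^{\star}:\bigotimes_{i=1}^k\Gamma_i\to\bigotimes_{j=1}^{k'}\Gamma_{\alpha(j)}$ is, componentwise, the morphism $\langle\bar\alpha,\text{identities}\rangle$ where $\bar\alpha$ sends the $p$-th position of the $j$-th block (a copy of the block of $\Gamma_{\alpha(j)}$) to the $p$-th position of the $\alpha(j)$-th block. Denotation: for $FV(M)\subseteq\vec x$, $\llbracket M\rrbracket_{\vec x}:((SD)^n)^{o}\times D\to\mathrm{Set}$ is defined by induction (functorial action induced by hom-functors and universal property of coends; in the abstraction case a morphism $\langle\alpha,\vec f\rangle\Rightarrow f$ acts as $\llbracket M\rrbracket(1_\Delta\oplus\langle\alpha,\vec f\rangle,f)$): $\llbracket x_i\rrbracket_{\vec x}(\Delta,a)=(SD)^n(\Delta,\langle\langle\rangle,\dots,\langle a\rangle,\dots,\langle\rangle\rangle)$ ($\langle a\rangle$ in position $i$); $\llbracket\lambda x.M\rrbracket_{\vec x}(\Delta,a)=\llbracket M\rrbracket_{\vec x\oplus\langle x\rangle}(\Delta\oplus\langle\vec a'\rangle,a')$ if $a=\vec a'\Rightarrow a'$ and $\emptyset$ if $a$ is atomic; \[\llbracket MN\rrbracket_{\vec x}(\Delta,a)=\int^{\vec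 a=\langle a_1,\dots,a_k\rangle\in SD}\int^{\Gamma_0,\dots,\Gamma_k\in(SD)^n}\llbracket M\rrbracket_{\vec x}(\Gamma_0,\vec a\Rightarrow a)\times\prod_{i=1}^k\llbracket N\rrbracket_{\vec x}(\Gamma_i,a_i)\times(SD)^n\Big(\Delta,\bigotimes_{i=0}^k\Gamma_i\Big).\] Type system $E^S_A$ (judgments $\Delta\vdash M:a$, $\Delta\in(SD)^n$, $a\in D$; derivations record the morphisms used): (Var) from morphisms $f_j:\vec a_j\to\langle\rangle$ ($j\neq i$) and $f_i:\vec a_i\to\langle a\rangle$ in $SD$ infer $x_1:\vec a_1,\dots,x_n:\vec a_n\vdash x_i:a$; (Abs) from $\Delta,x:\vec a\vdash M:a$ infer $\Delta\vdash\lambda x.M:\vec a\Rightarrow a$; (App) from $\Gamma_0\vdash M:\langle a_1,\dots,a_k\rangle\Rightarrow a$, $\Gamma_i\vdash N:a_i$ ($1\le i\le k$) and a morphism $\eta:\Delta\to\bigotimes_{i=0}^k\Gamma_i$ in $(SD)^n$ infer $\Delta\vdash MN:a$. Right action of $\eta=\langle g_1,\dots,g_n\rangle:\Delta'\to\Delta$ on a derivation $\pi$ of $\Delta\vdash M:a$, giving $\pi\{\eta\}$ of $\Delta'\vdash M:a$: on Var replace each $f_j$ by $f_j\circ g_j$; on Abs apply $\{\eta\oplus\langle 1\rangle\}$ to the premise; on App replace the morphism $\theta$ by $\theta\circ\eta$. Left action of $g:a\to b$ in $D$, giving $[g]\pi$ of $\Delta\vdash M:b$: on Var replace $f_i$ by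 $\langle g\rangle\circ f_i$; on Abs with $g=\langle\alpha,\vec g\rangle\Rightarrow g'$ ($\langle\alpha,\vec g\rangle:\vec b\to\vec a$) the premise becomes $([g']\pi)\{1_\Delta\oplus\langle\alpha,\vec g\rangle\}$; on App apply $[1\Rightarrow g]$ to the premise for $M$. Congruence $\sim$: the smallest equivalence relation compatible with the typing rules and containing: (i) for $\langle\alpha,f_1,\dots,f_{k'}\rangle:\vec a=\langle a_1,\dots,a_k\rangle\to\vec b=\langle b_1,\dots,b_{k'}\rangle$ in $SD$, the App-derivation with premises $\pi_0$ of $\Gamma_0\vdash M:\vec b\Rightarrow a$, $[f_i]\pi_{\alpha(i)}$ of $\Gamma_{\alpha(i)}\vdash N:b_i$ ($1\le i\le k'$) and morphism $(1\otimes\alpha^{\star})\circ\eta$ is equivalent to the App-derivation with premises $[\langle\alpha,\vec f\rangle\Rightarrow 1]\pi_0$ of $\Gamma_0\vdash M:\vec a\Rightarrow a$, $\pi_i$ of $\Gamma_i\vdash N:a_i$ ($1\le i\le k$) and morphism $\eta:\Delta\to\bigotimes_{j=0}^k\Gamma_j$; (ii) for $\theta_j:\Gamma_j\to\Gamma'_j$, the App-derivation with premises $\pi_0\{\theta_0\},\pi_i\{\theta_i\}$ and morphism $\eta:\Delta\to\bigotimes\Gamma_j$ is equivalent to the one with premises $\pi_0,\pi_i$ (contexts $\Gamma'_j$) and morphism $(\bigotimes_j\theta_j)\circ\eta$. $T_D(M)_{\vec x}(\Delta,a)$ is the set of $\sim$-classes $\tilde\pi$ of derivations $\pi$ of $\Delta\vdash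 M:a$ in $E^S_A$, and for $\eta:\Delta'\to\Delta$, $f:a\to a'$ it maps $\tilde\pi$ to the class of $[f](\pi\{\eta\})$. *)

(* Concrete, "raw data + validity predicate" encoding of the categories       *)
(* D_A, SD, (SD)^n, of the Set-valued functors [[M]]_x and T_D(M)_x, and of    *)
(* natural isomorphisms between them.  Sets are represented as setoids        *)
(* (carrier type + validity predicate + equivalence relation on valid         *)
(* elements), which is how the coend / congruence quotients are expressed.    *)
From mathcomp Require Import all_boot.

Set Implicit Arguments.
Unset Strict Implicit.
Unset Printing Implicit Defensive.

(* Small categories (arrow presentation; cmp f g is "f then g", meaningful    *)
(* when cod f = dom g).                                                       *)
Record smallcat := SmallCat {
  Ob : Type;
  Mor : Type;
  dom : Mor -> Ob;
  cod : Mor -> Ob;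
  idm : Ob -> Mor;
  cmp : Mor -> Mor -> Mor;
  dom_idm : forall o, dom (idm o) = o;
  cod_idm : forall o, cod (idm o) = o;
  dom_cmp : forall f g, cod f = dom g -> dom (cmp f g) = dom f;
  cod_cmp : forall f g, cod f = dom g -> cod (cmp f g) = cod g;
  cmp1m : forall f, cmp (idm (dom f)) f = f;
  cmpm1 : forall f, cmp f (idm (cod f)) = f;
  cmpA : forall f g h, cod f = dom g -> cod g = dom h ->
           cmp (cmp f g) h = cmp f (cmp g h)
}.

(* The class C of maps between finite ordinals. *)
Inductive cls := Bij | Inj | Surj | AllF.

Inductive term := Var (x : nat) | Lam (x : nat) (M : term) | App (M N : term).

Fixpoint fv (M : term) : seq nat :=
  match M with
  | Var x => [:: x]
  | Lam x M => [seq y <- fv M | y != x]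
  | App M N => fv M ++ fv N
  end.

(* 0-based position of variable x in the list xs (last occurrence, so that an *)
(* inner binder shadows an outer one).                                         *)
Definition vidx (xs : seq nat) (x : nat) : nat := (size xs).-1 - index x (rev xs).

Section Sem.
Variable A : smallcat.
Variable C : cls.

(* A map al : [size al] -> [n] (0-based, i |-> nth 0 al i) belongs to C. *)
Definition inC (n : nat) (al : seq nat) : bool :=
  match C with
  | Bij => uniq al && all (fun j => j \in al) (iota 0 n)
  | Inj => uniq al
  | Surj => all (fun j => j \in al) (iota 0 n)
  | AllF => true
  end.

(* Objects of D = D_A *)
Inductive ty := atom (o : Ob A) | arr (l : seq ty) (a : ty).

(* Raw morphisms of D: rA m (atomic), rArr al fs g = <al, fs> => g *)
Inductive rmor := rA (m : Mor A) | rArr (al : seq nat) (fs : seq rmor) (g : rmor).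

(* raw morphisms of SD: <al, fs> *)
Definition smor := (seq nat * seq rmor)%type.
Definition s0 : smor := ([::], [::]).
(* objects / raw morphisms of (SD)^n *)
Definition ctx := seq (seq ty).
Definition cmor := seq smor.

Fixpoint tyd (f : rmor) (a b : ty) {struct f} : Prop :=
  match f with
  | rA m => a = atom (dom m) /\ b = atom (cod m)
  | rArr al fs g =>
      match a, b with
      | arr l a0, arr l' b0 =>
          (* <al, fs> : l' -> l in SD, g : a0 -> b0 *)
          tyd g a0 b0 /\ size al = size l /\ size fs = size l /\
          all (fun j => j < size l') al /\ inC (size l') al /\
          (fix go (fs : seq rmor) (i : nat) {struct fs} : Prop :=
             match fs with
             | [::] => True
             | h :: t =>
                 (forall x y, onth l' (nth 0 al i) = Some x -> onth l i = Some y ->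
                    tyd h x y) /\ go t i.+1
             end) fs 0
      | _, _ => False
      end
  end.

Definition styd (p : smor) (xs ys : seq ty) : Prop :=
  size p.1 = size ys /\ size p.2 = size ys /\ all (fun j => j < size xs) p.1 /\
  inC (size xs) p.1 /\
  forall i f x y, i < size ys -> onth p.2 i = Some f ->
    onth xs (nth 0 p.1 i) = Some x -> onth ys i = Some y -> tyd f x y.

Definition ctyd (e : cmor) (D D' : ctx) : Prop :=
  size e = size D /\ size D' = size D /\
  forall p, p < size D -> styd (nth s0 e p) (nth [::] D p) (nth [::] D' p).

Fixpoint rid (a : ty) : rmor :=
  match a with
  | atom o => rA (idm o)
  | arr l b => rArr (iota 0 (size l))
                 ((fix m (l : seq ty) := match l with [::] => [::] | x :: t => rid x :: m t end) l)
                 (rid b)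
  end.
Definition sid (l : seq ty) : smor := (iota 0 (size l), map rid l).
Definition cid (D : ctx) : cmor := map sid D.

(* composition ("f then g"), by recursion on a fuel that is always sufficient *)
Fixpoint rsize (f : rmor) : nat :=
  match f with
  | rA _ => 1
  | rArr _ fs g =>
      (rsize g + (fix sz (fs : seq rmor) := match fs with [::] => 0 | h :: t => rsize h + sz t end) fs).+1
  end.

(* composite of <al,fs> then <be,gs> in SD is <al o be, (g_i o f_(be i))_i> *)
Definition scompWith (c : rmor -> rmor -> rmor) (p q : smor) : smor :=
  (map (nth 0 p.1) q.1,
   [seq c (nth ig.2 p.2 (nth 0 q.1 ig.1)) ig.2 | ig <- zip (iota 0 (size q.2)) q.2]).

Fixpoint rcompF (n : nat) (f g : rmor) : rmor :=
  match n with
  | 0 => f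
  | n'.+1 =>
      match f, g with
      | rA m, rA m' => rA (cmp m m')
      | rArr al fs f0, rArr be gs g0 =>
          (* (<al,fs> => f0) then (<be,gs> => g0) = (<be,gs> then <al,fs>) => (f0 then g0) *)
          let q := scompWith (rcompF n') (be, gs) (al, fs) in
          rArr q.1 q.2 (rcompF n' f0 g0)
      | _, _ => f
      end
  end.
Definition rcomp (f g : rmor) : rmor := rcompF (rsize f + rsize g) f g.
Definition scomp (p q : smor) : smor := scompWith rcomp p q.
Definition ccomp (e th : cmor) : cmor := [seq scomp pq.1 pq.2 | pq <- zip e th].

Definition ctensor (G D : ctx) : ctx := [seq x.1 ++ x.2 | x <- zip G D].
Definition bigtensor (n : nat) (Gs : seq ctx) : ctx := foldr ctensor (nseq n [::]) Gs.

(* tensor of morphisms th_j : Gs_j -> Gs'_j  (sources Gs given) *)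
Definition stens (szs : seq nat) (ps : seq smor) : smor :=
  (flatten [seq map (addn (sumn (take j szs))) (nth s0 ps j).1 | j <- iota 0 (size ps)],
   flatten (map snd ps)).
Definition ctensormor (n : nat) (Gs : seq ctx) (ths : seq cmor) : cmor :=
  [seq stens [seq size (nth [::] G p) | G <- Gs] [seq nth s0 th p | th <- ths]
  | p <- iota 0 n].

(* be^* : bigtensor Gs -> bigtensor (map (nth [::] Gs) be)  (identities) *)
Definition blockmap (n : nat) (Gs : seq ctx) (be : seq nat) : cmor :=
  [seq let szs := [seq size (nth [::] G p) | G <- Gs] in
       (flatten [seq [seq sumn (take j szs) + q | q <- iota 0 (nth 0 szs j)] | j <- be],
        flatten [seq map rid (nth [::] (nth [::] Gs j) p) | j <- be])
  | p <- iota 0 n].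

Definition unitctx (n i : nat) (a : ty) : ctx :=
  [seq if p == i then [:: a] else [::] | p <- iota 0 n].
Definition unitmor (n i : nat) (f : rmor) : cmor :=
  [seq if p == i then ([:: 0], [:: f]) else s0 | p <- iota 0 n].

(* Set-valued functors ((SD)^n)^o x D -> Set, as setoids:                     *)
(*   el D a x   : x represents an element of F(D,a)                          *)
(*   eqv D a x y: x and y represent the same element of F(D,a)                *)
(*   act D a D' a' e f x : F(e,f)(x) in F(D',a'), for e : D' -> D, f : a -> a' *)
Record SF := MkSF {
  car : Type;
  dflt : car;
  el : ctx -> ty -> car -> Prop;
  eqv : ctx -> ty -> car -> car -> Prop;
  act : ctx -> ty -> ctx -> ty -> cmor -> rmor -> car -> car
}.
Arguments dflt : clear implicits.
Arguments el : clear implicits.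
Arguments eqv : clear implicits.
Arguments act : clear implicits.

Definition nat_iso (F G : SF) : Prop :=
  exists (phi : ctx -> ty -> car F -> car G) (psi : ctx -> ty -> car G -> car F),
    (forall D a x, el F D a x -> el G D a (phi D a x)) /\
    (forall D a y, el G D a y -> el F D a (psi D a y)) /\
    (forall D a x x', eqv F D a x x' -> eqv G D a (phi D a x) (phi D a x')) /\
    (forall D a y y', eqv G D a y y' -> eqv F D a (psi D a y) (psi D a y')) /\
    (forall D a x, el F D a x -> eqv F D a (psi D a (phi D a x)) x) /\
    (forall D a y, el G D a y -> eqv G D a (phi D a (psi D a y)) y) /\
    (forall D a D' a' e f x, ctyd e D' D -> tyd f a a' -> el F D a x ->
       eqv G D' a' (phi D' a' (act F D a D' a' e f x)) (act G D a D' a' e f (phi D a x))).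

Definition var_sf (xs : seq nat) (x : nat) : SF :=
  {| car := cmor; dflt := [::];
     el D a g := x \in xs /\ ctyd g D (unitctx (size xs) (vidx xs x) a);
     eqv D a g g' := (x \in xs /\ ctyd g D (unitctx (size xs) (vidx xs x) a)) /\ g = g';
     act D a D' a' e f g := ccomp e (ccomp g (unitmor (size xs) (vidx xs x) f)) |}.

Definition lam_sf (S : SF) : SF :=
  {| car := car S; dflt := dflt S;
     el D a m := match a with arr l b => el S (rcons D l) b m | atom _ => False end;
     eqv D a m m' := match a with arr l b => eqv S (rcons D l) b m m' | atom _ => False end;
     act D a D' a' e f m :=
       match a, a', f with
       | arr l b, arr l' b', rArr al gs g => act S (rcons D l) b (rcons D' l') b' (rcons e (al, gs)) g m
       | _, _, _ => m
       end |}.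

(* elements of the coend for MN: (as, Gs = G_0..G_k, m, ns = n_1..n_k, theta) *)
Record appd (X Y : Type) := AppD {
  ad_as : seq ty; ad_G : seq ctx; ad_m : X; ad_ns : seq Y; ad_th : cmor }.

Section App.
Variables (n : nat) (SM SN : SF).

Definition app_el (D : ctx) (a : ty) (x : appd (car SM) (car SN)) : Prop :=
  let: AppD as_ Gs m ns th := x in
  size Gs = (size as_).+1 /\ all (fun G => size G == n) Gs /\
  el SM (nth [::] Gs 0) (arr as_ a) m /\ size ns = size as_ /\
  (forall i, i < size as_ -> el SN (nth [::] Gs i.+1) (nth a as_ i) (nth (dflt SN) ns i)) /\
  ctyd th D (bigtensor n Gs).

Inductive app_eqv (D : ctx) (a : ty) : appd (car SM) (car SN) -> appd (car SM) (car SN) -> Prop :=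
| ae_refl x : app_el D a x -> app_eqv D a x x
| ae_sym x y : app_eqv D a x y -> app_eqv D a y x
| ae_trans x y z : app_eqv D a x y -> app_eqv D a y z -> app_eqv D a x z
| ae_cmp as_ Gs m m' ns ns' th :
    app_el D a (AppD as_ Gs m ns th) -> app_el D a (AppD as_ Gs m' ns' th) ->
    eqv SM (nth [::] Gs 0) (arr as_ a) m m' ->
    (forall i, i < size as_ ->
       eqv SN (nth [::] Gs i.+1) (nth a as_ i) (nth (dflt SN) ns i) (nth (dflt SN) ns' i)) ->
    app_eqv D a (AppD as_ Gs m ns th) (AppD as_ Gs m' ns' th)
| ae_i as_ bs G0 Gs al fs m ns e :
    styd (al, fs) as_ bs -> size Gs = size as_ -> all (fun G => size G == n) (G0 :: Gs) ->
    el SM G0 (arr bs a) m -> size ns = size as_ ->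
    (forall i, i < size as_ -> el SN (nth [::] Gs i) (nth a as_ i) (nth (dflt SN) ns i)) ->
    ctyd e D (bigtensor n (G0 :: Gs)) ->
    app_eqv D a
      (AppD as_ (G0 :: Gs) (act SM G0 (arr bs a) G0 (arr as_ a) (cid G0) (rArr al fs (rid a)) m) ns e)
      (AppD bs (G0 :: map (nth [::] Gs) al) m
         [seq act SN (nth [::] Gs (nth 0 al i)) (nth a as_ (nth 0 al i))
                     (nth [::] Gs (nth 0 al i)) (nth a bs i)
                     (cid (nth [::] Gs (nth 0 al i))) (nth (rid a) fs i)
                     (nth (dflt SN) ns (nth 0 al i)) | i <- iota 0 (size bs)]
         (ccomp e (blockmap n (G0 :: Gs) (0 :: map S al))))
| ae_ii as_ Gs Gs' ths m ns e :
    size Gs = (size as_).+1 -> size Gs' = size Gs -> size ths = size Gs ->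
    all (fun G => size G == n) Gs -> all (fun G => size G == n) Gs' ->
    (forall j, j < size Gs -> ctyd (nth [::] ths j) (nth [::] Gs j) (nth [::] Gs' j)) ->
    el SM (nth [::] Gs' 0) (arr as_ a) m -> size ns = size as_ ->
    (forall i, i < size as_ -> el SN (nth [::] Gs' i.+1) (nth a as_ i) (nth (dflt SN) ns i)) ->
    ctyd e D (bigtensor n Gs) ->
    app_eqv D a
      (AppD as_ Gs
         (act SM (nth [::] Gs' 0) (arr as_ a) (nth [::] Gs 0) (arr as_ a) (nth [::] ths 0)
              (rid (arr as_ a)) m)
         [seq act SN (nth [::] Gs' i.+1) (nth a as_ i) (nth [::] Gs i.+1) (nth a as_ i)
                     (nth [::] ths i.+1) (rid (nth a as_ i)) (nth (dflt SN) ns i)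
         | i <- iota 0 (size as_)] e)
      (AppD as_ Gs' m ns (ccomp e (ctensormor n Gs ths))).

Definition app_act (D : ctx) (a : ty) (D' : ctx) (a' : ty) (e : cmor) (f : rmor)
  (x : appd (car SM) (car SN)) : appd (car SM) (car SN) :=
  let: AppD as_ Gs m ns th := x in
  AppD as_ Gs
    (act SM (nth [::] Gs 0) (arr as_ a) (nth [::] Gs 0) (arr as_ a') (cid (nth [::] Gs 0))
         (rArr (iota 0 (size as_)) (map rid as_) f) m)
    ns (ccomp e th).

Definition app_sf : SF :=
  {| car := appd (car SM) (car SN);
     dflt := AppD [::] [::] (dflt SM) [::] [::];
     el := app_el; eqv := app_eqv; act := app_act |}.
End App.

Fixpoint sem (xs : seq nat) (M : term) : SF :=
  match M with
  | Var x => var_sf xs x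
  | Lam x M' => lam_sf (sem (rcons xs x) M')
  | App M1 N => app_sf (size xs) (sem xs M1) (sem xs N)
  end.

(* derivations; each node records the data (morphisms, premise contexts and   *)
(* types) that are not determined by the conclusion judgment                  *)
Inductive deriv :=
| dVar (fs : cmor)
| dAbs (l : seq ty) (p : deriv)
| dApp (as_ : seq ty) (Gs : seq ctx) (p0 : deriv) (ps : seq deriv) (e : cmor).

Definition d0 := dVar [::].

Inductive der_ok : seq nat -> ctx -> term -> ty -> deriv -> Prop :=
| okVar xs D x a fs :
    x \in xs -> ctyd fs D (unitctx (size xs) (vidx xs x) a) ->
    der_ok xs D (Var x) a (dVar fs)
| okAbs xs D x M l a p :
    der_ok (rcons xs x) (rcons D l) M a p -> der_ok xs D (Lam x M) (arr l a) (dAbs l p)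
| okApp xs D M N a as_ Gs p0 ps e :
    size Gs = (size as_).+1 -> all (fun G => size G == size xs) Gs ->
    der_ok xs (nth [::] Gs 0) M (arr as_ a) p0 -> size ps = size as_ ->
    (forall i, i < size as_ -> der_ok xs (nth [::] Gs i.+1) N (nth a as_ i) (nth d0 ps i)) ->
    ctyd e D (bigtensor (size xs) Gs) ->
    der_ok xs D (App M N) a (dApp as_ Gs p0 ps e).

Fixpoint ract (e : cmor) (p : deriv) : deriv :=
  match p with
  | dVar fs => dVar (ccomp e fs)
  | dAbs l p' => dAbs l (ract (rcons e (sid l)) p')
  | dApp as_ Gs p0 ps th => dApp as_ Gs p0 ps (ccomp e th)
  end.

(* left action [g]p, for p a derivation of D |- M : _ and g : _ -> b *)
Fixpoint lact (xs : seq nat) (D : ctx) (M : term) (b : ty) (g : rmor) (p : deriv) : deriv :=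
  match p, M with
  | dVar fs, Var x => dVar (ccomp fs (unitmor (size xs) (vidx xs x) g))
  | dAbs l p', Lam x M' =>
      match g, b with
      | rArr al gs g', arr l' b0 =>
          dAbs l' (ract (rcons (cid D) (al, gs)) (lact (rcons xs x) (rcons D l) M' b0 g' p'))
      | _, _ => p
      end
  | dApp as_ Gs p0 ps th, App M1 _ =>
      dApp as_ Gs (lact xs (nth [::] Gs 0) M1 (arr as_ b) (rArr (iota 0 (size as_)) (map rid as_) g) p0)
           ps th
  | _, _ => p
  end.

Inductive cong : seq nat -> ctx -> term -> ty -> deriv -> deriv -> Prop :=
| c_refl xs D M a p : der_ok xs D M a p -> cong xs D M a p p
| c_sym xs D M a p q : cong xs D M a p q -> cong xs D M a q p
| c_trans xs D M a p q r : cong xs D M a p q -> cong xs D M a q r -> cong xs D M a p r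
| c_abs xs D x M l a p p' :
    cong (rcons xs x) (rcons D l) M a p p' -> cong xs D (Lam x M) (arr l a) (dAbs l p) (dAbs l p')
| c_app xs D M N a as_ Gs p0 p0' ps ps' e :
    der_ok xs D (App M N) a (dApp as_ Gs p0 ps e) ->
    der_ok xs D (App M N) a (dApp as_ Gs p0' ps' e) ->
    cong xs (nth [::] Gs 0) M (arr as_ a) p0 p0' ->
    (forall i, i < size as_ ->
       cong xs (nth [::] Gs i.+1) N (nth a as_ i) (nth d0 ps i) (nth d0 ps' i)) ->
    cong xs D (App M N) a (dApp as_ Gs p0 ps e) (dApp as_ Gs p0' ps' e)
| c_i xs D M N a as_ bs G0 Gs al fs p0 ps e :
    styd (al, fs) as_ bs -> size Gs = size as_ ->
    all (fun G => size G == size xs) (G0 :: Gs) ->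
    der_ok xs G0 M (arr bs a) p0 -> size ps = size as_ ->
    (forall i, i < size as_ -> der_ok xs (nth [::] Gs i) N (nth a as_ i) (nth d0 ps i)) ->
    ctyd e D (bigtensor (size xs) (G0 :: Gs)) ->
    cong xs D (App M N) a
      (dApp bs (G0 :: map (nth [::] Gs) al) p0
         [seq lact xs (nth [::] Gs (nth 0 al i)) N (nth a bs i) (nth (rid a) fs i)
                   (nth d0 ps (nth 0 al i)) | i <- iota 0 (size bs)]
         (ccomp e (blockmap (size xs) (G0 :: Gs) (0 :: map S al))))
      (dApp as_ (G0 :: Gs) (lact xs G0 M (arr as_ a) (rArr al fs (rid a)) p0) ps e)
| c_ii xs D M N a as_ Gs Gs' ths p0 ps e :
    size Gs = (size as_).+1 -> size Gs' = size Gs -> size ths = size Gs ->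
    all (fun G => size G == size xs) Gs -> all (fun G => size G == size xs) Gs' ->
    (forall j, j < size Gs -> ctyd (nth [::] ths j) (nth [::] Gs j) (nth [::] Gs' j)) ->
    der_ok xs (nth [::] Gs' 0) M (arr as_ a) p0 -> size ps = size as_ ->
    (forall i, i < size as_ -> der_ok xs (nth [::] Gs' i.+1) N (nth a as_ i) (nth d0 ps i)) ->
    ctyd e D (bigtensor (size xs) Gs) ->
    cong xs D (App M N) a
      (dApp as_ Gs (ract (nth [::] ths 0) p0)
         [seq ract (nth [::] ths i.+1) (nth d0 ps i) | i <- iota 0 (size as_)] e)
      (dApp as_ Gs' p0 ps (ccomp e (ctensormor (size xs) Gs ths))).

Definition TD (xs : seq nat) (M : term) : SF :=
  {| car := deriv; dflt := d0;
     el D a p := der_ok xs D M a p;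
     eqv D a := cong xs D M a;
     act D a D' a' e f p := lact xs D' M a' f (ract e p) |}.

End Sem.

(* An element of [[M]]_xs is, once the coends are unfolded, a tree of the same shape as a
   derivation of M in E^S_A carrying the same morphisms: a variable denotes a morphism into a
   unit context, an abstraction an element for its body, and an element of the coend for MN
   is an application node (as, G_0..G_k, m, n_1..n_k, theta).  Reading one as the other gives
   translations [to_deriv] and [of_deriv] that are mutually inverse on the nose.  The coend
   for MN is the quotient by exactly the relations (i) and (ii) that generate ~, so both
   translations respect the equivalences once the functorial actions are known to correspond;
   that naturality is proved by induction on M and rests on the category laws of D, SD and
   (SD)^n for the raw composition. *)

From Pilot Require Import Defs.
From mathcomp Require Import all_boot zify.

Set Implicit Arguments. Unset Strict Implicit. Unset Printing Implicit Defensive.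

Lemma onth_nth_lt T (x0 : T) s i : i < size s -> onth s i = Some (nth x0 s i).
Proof. by move=> lt_i_s; rewrite onthE (nth_map x0). Qed.

Lemma eq_from_nth_dflt T (s1 s2 : seq T) : size s1 = size s2 ->
  (forall x0 i, i < size s1 -> nth x0 s1 i = nth x0 s2 i) -> s1 = s2.
Proof.
case: s1 => [|x s1] eq_sz eq_nth; first by case: s2 eq_sz eq_nth.
by apply: (eq_from_nth (x0 := x)) => // i; apply: eq_nth.
Qed.

Lemma nth_map_iota T (F : nat -> T) x0 n i : i < n -> nth x0 [seq F j | j <- iota 0 n] i = F i.
Proof. by move=> lt_in; rewrite (nth_map 0) ?size_iota // nth_iota. Qed.

Lemma mem_iota0_lt i n : i \in iota 0 n -> i < n.
Proof. by rewrite mem_iota. Qed.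

Section Morphisms.
Variables (A : smallcat) (C : cls).
Local Notation ty := (ty A).
Local Notation rmor := (rmor A).
Local Notation tyd := (@tyd A C).
Local Notation styd := (@styd A C).
Local Notation inC := (inC C).

(* The inner fixpoint of [tyd] on arrows, given a name; [i] is the position of the head of [fs]. *)
Definition tyd_from (l l' : seq ty) (al : seq nat) :=
  fix go (fs : seq rmor) (i : nat) {struct fs} : Prop :=
    if fs is h :: t then
      (forall x y, onth l' (nth 0 al i) = Some x -> onth l i = Some y -> tyd h x y) /\ go t i.+1
    else True.

Lemma tyd_fromP l l' al fs k : tyd_from l l' al fs k <->
  (forall i h, onth fs i = Some h -> forall x y,
     onth l' (nth 0 al (k + i)) = Some x -> onth l (k + i) = Some y -> tyd h x y).
Proof.
elim: fs k => [|h t IH] k /=; first by split=> // _ [].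
split.
- move=> [tyd_h /IH tyd_t] [|i] h' /=; first by case=> <-; rewrite addn0.
  by move=> t_i x y; rewrite -addSnnS; apply: tyd_t.
- move=> tyd_fs; split; first by move=> x y; rewrite -(addn0 k); apply: (tyd_fs 0).
  by apply/IH => i h' t_i x y; rewrite addSnnS; apply: (tyd_fs i.+1).
Qed.

Lemma tyd_arr al fs g l a l' b :
  tyd (rArr al fs g) (arr l a) (arr l' b) <-> tyd g a b /\ styd (al, fs) l' l.
Proof.
have -> : tyd (rArr al fs g) (arr l a) (arr l' b) =
  (tyd g a b /\ size al = size l /\ size fs = size l /\ all (fun j => j < size l') al /\
   inC (size l') al /\ tyd_from l l' al fs 0) by [].
rewrite tyd_fromP /Defs.styd /=; split.
- move=> [? [? [? [? [? tyd_fs]]]]]; do 5 split=> //.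
  by move=> i f x y _ /tyd_fs; rewrite add0n; apply.
- move=> [tyd_g [sz_al [sz_fs [al_lt [inC_al tyd_fs]]]]]; do 5 split=> //.
  move=> i h fs_i x y; rewrite add0n.
  have lt_i_l : i < size l by rewrite -sz_fs -onthTE fs_i.
  exact: tyd_fs lt_i_l fs_i.
Qed.

Lemma tyd_atom_inv f o b : tyd f (atom o) b ->
  exists m, [/\ f = rA m, o = dom m & b = atom (cod m)].
Proof. by case: f => [m|al fs g] //= [[->] ->]; exists m. Qed.

Lemma tyd_arr_inv f l a b : tyd f (arr l a) b ->
  exists al fs g l' b', [/\ f = rArr al fs g, b = arr l' b', tyd g a b' & styd (al, fs) l' l].
Proof.
case: f => [m [] //|al fs g]; case: b => [//|l' b'] /tyd_arr[tyd_g styd_fs].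
by exists al, fs, g, l', b'.
Qed.

Lemma stydP p X Y : styd p X Y <->
  [/\ size p.1 = size Y, size p.2 = size Y, all (fun j => j < size X) p.1, inC (size X) p.1 &
      forall d dx i, i < size Y -> tyd (nth d p.2 i) (nth dx X (nth 0 p.1 i)) (nth dx Y i)].
Proof.
split.
- move=> [sz1 [sz2 [p1_lt [inC_p1 tyd_p2]]]]; split=> // d dx i lt_iY.
  have lt_p1i : nth 0 p.1 i < size X by apply: (allP p1_lt); rewrite mem_nth ?sz1.
  by apply: (tyd_p2 i) => //; apply: onth_nth_lt; rewrite ?sz2.
- move=> [sz1 sz2 p1_lt inC_p1 tyd_p2]; do 4 split=> //.
  move=> i f x y lt_iY p2_i X_i Y_i.
  move: (tyd_p2 f x i lt_iY).
  by rewrite (onth_nth f _ _ _ p2_i) (onth_nth x _ _ _ X_i) (onth_nth x _ _ _ Y_i).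
Qed.

Lemma styd_index_lt p X Y i : styd p X Y -> i < size Y -> nth 0 p.1 i < size X.
Proof. by case/stydP=> sz1 _ p1_lt _ _ lt_iY; apply: (allP p1_lt); rewrite mem_nth ?sz1. Qed.

Lemma inC_iota n : inC n (iota 0 n).
Proof. by rewrite /Defs.inC; case: C; rewrite ?iota_uniq //=; apply/allP. Qed.

Lemma inC_map_nth m n (p1 q1 : seq nat) : size p1 = n ->
  all (fun j => j < m) p1 -> all (fun j => j < n) q1 ->
  inC m p1 -> inC n q1 -> inC m (map (nth 0 p1) q1).
Proof.
move=> sz_p1 p1_lt q1_lt.
have uniq_map : uniq p1 -> uniq q1 -> uniq (map (nth 0 p1) q1).
  move=> uniq_p1 uniq_q1; rewrite map_inj_in_uniq // => j k /(allP q1_lt) lt_j /(allP q1_lt) lt_k.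
  by move/eqP; rewrite nth_uniq ?sz_p1 // => /eqP.
have onto_map : all (mem p1) (iota 0 m) -> all (mem q1) (iota 0 n) ->
    all (mem (map (nth 0 p1) q1)) (iota 0 m).
  move=> /allP onto_p1 /allP onto_q1; apply/allP => j /onto_p1 /(nthP 0) [k lt_k <-].
  by apply: map_f; apply: onto_q1; rewrite mem_iota -sz_p1.
rewrite /Defs.inC; case: C => //.
by move=> /andP[? ?] /andP[? ?]; rewrite uniq_map ?onto_map.
Qed.

Lemma ty_nested_ind (P : ty -> Prop) :
  (forall o, P (atom o)) ->
  (forall l a, (forall i x, onth l i = Some x -> P x) -> P a -> P (arr l a)) ->
  forall a, P a.
Proof.
move=> P_atom P_arr; fix IH 1; case=> [o|l a]; first exact: P_atom.
apply: P_arr; last exact: IH.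
elim: l => [|x l IHl] [|i] y /= E; [discriminate E | discriminate E | | exact: IHl E].
by case: E => <-; exact: IH.
Qed.

Local Notation rsize := (@rsize A).
Local Notation rcomp := (@rcomp A).
Local Notation scomp := (@scomp A).
Local Notation rid := (@rid A).
Local Notation sid := (@sid A).

Lemma rsize_arr al fs g : rsize (rArr al fs g) = (rsize g + sumn (map rsize fs)).+1.
Proof. by rewrite /=; congr (_ + _).+1; elim: fs => //= h t ->. Qed.

Lemma rsize_gt0 f : 0 < rsize f.
Proof. by case: f. Qed.

Lemma rsize_nth_max d fs k : rsize (nth d fs k) <= maxn (rsize d) (sumn (map rsize fs)).
Proof.
elim: fs k => [|h fs IH] [|k] /=; rewrite ?nth_nil ?leq_maxl //; first by lia.
by move: (IH k); lia.
Qed.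

Lemma rsize_nth_sum d fs n k : size fs = n -> k < n -> rsize (nth d fs k) <= sumn (map rsize fs).
Proof.
move=> <-; elim: fs k => [|h fs IH] [|k] //= lt_k; first by lia.
by move: (IH k lt_k); lia.
Qed.

Lemma eq_map_zip_bounded U (F G : nat * rmor -> U) fs k :
  (forall i h, rsize h <= sumn (map rsize fs) -> F (i, h) = G (i, h)) ->
  [seq F ih | ih <- zip (iota k (size fs)) fs] = [seq G ih | ih <- zip (iota k (size fs)) fs].
Proof.
elim: fs k => [|h fs IH] k //= eqFG; congr (_ :: _); first by apply: eqFG; lia.
by apply: IH => i h' le_h'; apply: eqFG; lia.
Qed.

Lemma rcompF_fuel n m f g : maxn (rsize f) (rsize g) <= n -> maxn (rsize f) (rsize g) <= m ->
  rcompF n f g = rcompF m f g.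
Proof.
elim: n m f g => [|n IH] [|m] f g; rewrite ?leqn0 ?maxn_eq0; try by move: (rsize_gt0 f); lia.
case: f => [mf|al fs f0]; case: g => [mg|be gs g0] //.
rewrite !rsize_arr => le_n le_m /=; congr (rArr _ _ _); last by apply: IH; lia.
apply: eq_map_zip_bounded => i h le_h /=.
by apply: IH; move: (rsize_nth_max h gs (nth 0 al i)); lia.
Qed.

Lemma rcomp_atom m m' : rcomp (rA m) (rA m') = rA (cmp m m').
Proof. by []. Qed.

Lemma rcomp_arr al fs f0 be gs g0 :
  rcomp (rArr al fs f0) (rArr be gs g0) =
  rArr (scomp (be, gs) (al, fs)).1 (scomp (be, gs) (al, fs)).2 (rcomp f0 g0).
Proof.
rewrite /rcomp !rsize_arr addSn /= /scomp /scompWith /=.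
congr (rArr _ _ _); last by apply: rcompF_fuel; lia.
apply: eq_map_zip_bounded => i h le_h /=.
by apply: rcompF_fuel; move: (rsize_nth_max h gs (nth 0 al i)); rewrite -/rsize; lia.
Qed.

Lemma rid_arr l a : rid (arr l a) = rArr (sid l).1 (sid l).2 (rid a).
Proof. by rewrite /=; congr (rArr _ _ _); elim: l => //= x l ->. Qed.

Lemma scomp_fst p q : (scomp p q).1 = map (nth 0 p.1) q.1.
Proof. by []. Qed.

Lemma size_scomp_snd p q : size (scomp p q).2 = size q.2.
Proof. by rewrite /scomp /scompWith /= size_map size_zip size_iota minnn. Qed.

Lemma nth_scomp_snd p q d i : i < size q.2 -> nth 0 q.1 i < size p.2 ->
  nth d (scomp p q).2 i = rcomp (nth d p.2 (nth 0 q.1 i)) (nth d q.2 i).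
Proof.
move=> lt_i lt_qi; rewrite /scomp /scompWith /= (nth_map (0, d)) ?size_zip ?size_iota ?minnn //.
by rewrite nth_zip ?size_iota // nth_iota //= (set_nth_default d).
Qed.

Lemma styd_scomp_lift p q X Y Z : styd p X Y -> styd q Y Z ->
  (forall d dx i, i < size Z ->
     tyd (rcomp (nth d p.2 (nth 0 q.1 i)) (nth d q.2 i))
         (nth dx X (nth 0 p.1 (nth 0 q.1 i))) (nth dx Z i)) ->
  styd (scomp p q) X Z.
Proof.
move=> styd_p styd_q tyd_pq; have /stydP[P1 P2 P3 P4 _] := styd_p.
have /stydP[Q1 Q2 Q3 Q4 _] := styd_q.
apply/stydP; split.
- by rewrite scomp_fst size_map.
- by rewrite size_scomp_snd.
- rewrite scomp_fst; apply/allP => _ /mapP [k /(allP Q3) lt_k ->].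
  by apply: (allP P3); rewrite mem_nth ?P1.
- by rewrite scomp_fst; apply: inC_map_nth P4 Q4.
- move=> d dx i lt_i; have lt_qi := styd_index_lt styd_q lt_i.
  by rewrite nth_scomp_snd ?Q2 ?P2 // scomp_fst (nth_map 0) ?Q1 //; apply: tyd_pq.
Qed.

Lemma scomp_assoc_lift p q r X Y Z W : styd p X Y -> styd q Y Z -> styd r Z W ->
  (forall d i, i < size W ->
     rcomp (rcomp (nth d p.2 (nth 0 q.1 (nth 0 r.1 i))) (nth d q.2 (nth 0 r.1 i))) (nth d r.2 i) =
     rcomp (nth d p.2 (nth 0 q.1 (nth 0 r.1 i))) (rcomp (nth d q.2 (nth 0 r.1 i)) (nth d r.2 i))) ->
  scomp (scomp p q) r = scomp p (scomp q r).
Proof.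
move=> styd_p styd_q styd_r assoc_pqr.
have /stydP[_ P2 _ _ _] := styd_p; have /stydP[Q1 Q2 _ _ _] := styd_q.
have /stydP[R1 R2 R3 _ _] := styd_r.
rewrite [LHS]surjective_pairing [RHS]surjective_pairing; congr (_, _).
  rewrite !scomp_fst -map_comp; apply/eq_in_map => j /(allP R3) lt_j /=.
  by rewrite (nth_map 0) ?Q1.
apply: eq_from_nth_dflt; first by rewrite !size_scomp_snd.
move=> d i; rewrite size_scomp_snd R2 => lt_i.
have lt_ri := styd_index_lt styd_r lt_i; have lt_qri := styd_index_lt styd_q lt_ri.
rewrite nth_scomp_snd ?size_scomp_snd ?Q2 ?R2 // nth_scomp_snd ?P2 ?R2 //.
rewrite nth_scomp_snd ?scomp_fst ?(nth_map 0) ?P2 ?R1 ?Q1 //.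
rewrite nth_scomp_snd ?Q2 ?P2 //; first exact: assoc_pqr.
all: by rewrite ?size_scomp_snd ?Q2 ?R2.
Qed.

Lemma scomp_idl_lift p X Y : styd p X Y ->
  (forall d dx i, i < size Y -> rcomp (rid (nth dx X (nth 0 p.1 i))) (nth d p.2 i) = nth d p.2 i) ->
  scomp (sid X) p = p.
Proof.
move=> styd_p idl_p; have /stydP[P1 P2 P3 _ _] := styd_p.
rewrite [LHS]surjective_pairing [RHS]surjective_pairing; congr (_, _).
  rewrite scomp_fst -[RHS]map_id; apply/eq_in_map => j /(allP P3) lt_j /=.
  by rewrite nth_iota.
apply: eq_from_nth_dflt; first by rewrite size_scomp_snd.
move=> d i; rewrite size_scomp_snd P2 => lt_i.
have lt_pi := styd_index_lt styd_p lt_i.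
have [dx] : inhabited ty by case: (X) lt_pi => // x _; constructor.
rewrite nth_scomp_snd ?P2 //= ?size_map //.
by rewrite (nth_map dx) // idl_p.
Qed.

Lemma scomp_idr_lift p X Y : styd p X Y ->
  (forall d dx i, i < size Y -> rcomp (nth d p.2 i) (rid (nth dx Y i)) = nth d p.2 i) ->
  scomp p (sid Y) = p.
Proof.
move=> styd_p idr_p; have /stydP[P1 P2 _ _ _] := styd_p.
rewrite [LHS]surjective_pairing [RHS]surjective_pairing; congr (_, _).
  by rewrite scomp_fst /= -P1 -/(mkseq _ _) mkseq_nth.
apply: eq_from_nth_dflt; first by rewrite size_scomp_snd /= size_map.
move=> d i; rewrite size_scomp_snd (size_map rid) => lt_i.
have [dx] : inhabited ty by case: (Y) lt_i => // y _; constructor.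
rewrite nth_scomp_snd ?size_map ?nth_iota ?P2 // add0n.
by rewrite (nth_map dx) // idr_p.
Qed.

Lemma styd_sid_lift X :
  (forall dx i, i < size X -> tyd (rid (nth dx X i)) (nth dx X i) (nth dx X i)) ->
  styd (sid X) X X.
Proof.
move=> tyd_rid_X; apply/stydP; split=> /=.
- by rewrite size_iota.
- by rewrite size_map.
- by apply/allP => j; rewrite mem_iota.
- exact: inC_iota.
- move=> d dx i lt_i; rewrite nth_iota // (nth_map dx) //.
  exact: tyd_rid_X.
Qed.

Lemma tyd_rcomp f g a b c : tyd f a b -> tyd g b c -> tyd (rcomp f g) a c.
Proof.
have [n] := ubnP (rsize f + rsize g); elim: n f g a b c => // n IH f g a b c lt_n.
case: a => [o|l a] tyd_f.
  case/tyd_atom_inv: tyd_f lt_n => m [-> -> ->] _ /tyd_atom_inv [m' [-> dom_m' ->]].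
  by rewrite rcomp_atom /= dom_cmp ?cod_cmp.
case/tyd_arr_inv: tyd_f => al [fs [f0 [l' [b0 [Ef -> tyd_f0 styd_fs]]]]].
case/tyd_arr_inv => be [gs [g0 [l'' [c0 [Eg -> tyd_g0 styd_gs]]]]]; subst f g.
move: lt_n; rewrite !rsize_arr rcomp_arr => lt_n; apply/tyd_arr; split.
  by apply: (IH _ _ _ _ _ _ tyd_f0 tyd_g0); lia.
rewrite -surjective_pairing; apply: (styd_scomp_lift styd_gs styd_fs) => d dx i lt_i.
have /stydP[_ F2 _ _ tyd_fs] := styd_fs; have /stydP[_ G2 _ _ tyd_gs] := styd_gs.
rewrite /= in F2 G2 tyd_fs tyd_gs.
have lt_ai := styd_index_lt styd_fs lt_i.
apply: (IH _ _ _ _ _ _ (tyd_gs _ _ _ lt_ai) (tyd_fs _ _ _ lt_i)).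
have := rsize_nth_sum d G2 lt_ai.
have := rsize_nth_sum d F2 lt_i.
lia.
Qed.

(* Left and right unit laws must be proved together: arrows are contravariant in their arguments. *)
Lemma rcomp_rid f a b : tyd f a b -> rcomp (rid a) f = f /\ rcomp f (rid b) = f.
Proof.
have [n] := ubnP (rsize f); elim: n f a b => // n IH f a b lt_n.
case: a => [o|l a] tyd_f.
  by case/tyd_atom_inv: tyd_f => m [-> -> ->]; rewrite /rcomp /= cmp1m cmpm1.
case/tyd_arr_inv: tyd_f lt_n => al [fs [f0 [l' [b0 [-> -> tyd_f0 styd_fs]]]]].
rewrite rsize_arr => lt_n; have /stydP[_ F2 _ _ tyd_fs] := styd_fs; rewrite /= in F2 tyd_fs.
have lt_fs d i : i < size l -> rsize (nth d fs i) < n.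
  by move=> lt_i; have := rsize_nth_sum d F2 lt_i; lia.
have [idl_f0 idr_f0] : rcomp (rid a) f0 = f0 /\ rcomp f0 (rid b0) = f0.
  by apply: (IH _ _ _ _ tyd_f0); lia.
rewrite !rid_arr !rcomp_arr idl_f0 idr_f0 -!surjective_pairing.
rewrite (scomp_idr_lift styd_fs) ?(scomp_idl_lift styd_fs) //.
- by move=> d dx i lt_i; case: (IH _ _ _ (lt_fs d i lt_i) (tyd_fs d dx i lt_i)).
- by move=> d dx i lt_i; case: (IH _ _ _ (lt_fs d i lt_i) (tyd_fs d dx i lt_i)).
Qed.

Lemma rcomp_idl f a b : tyd f a b -> rcomp (rid a) f = f.
Proof. by case/rcomp_rid. Qed.

Lemma rcomp_idr f a b : tyd f a b -> rcomp f (rid b) = f.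
Proof. by case/rcomp_rid. Qed.

Lemma rcomp_assoc f g h a b c d : tyd f a b -> tyd g b c -> tyd h c d ->
  rcomp (rcomp f g) h = rcomp f (rcomp g h).
Proof.
have [n] := ubnP (rsize f + rsize g + rsize h).
elim: n f g h a b c d => // n IH f g h a b c d lt_n.
case: a => [o|l1 a1] tyd_f.
  case/tyd_atom_inv: tyd_f => m [-> _ ->] /tyd_atom_inv [m' [-> mm' ->]].
  by case/tyd_atom_inv => m'' [-> m'm'' _]; rewrite !rcomp_atom cmpA.
case/tyd_arr_inv: tyd_f => al [fs [f0 [l2 [a2 [Ef -> tyd_f0 styd_fs]]]]].
case/tyd_arr_inv => be [gs [g0 [l3 [a3 [Eg -> tyd_g0 styd_gs]]]]].
case/tyd_arr_inv => ga [hs [h0 [l4 [a4 [Eh _ tyd_h0 styd_hs]]]]]; subst f g h.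
move: lt_n; rewrite !rsize_arr => lt_n.
have /stydP[_ F2 _ _ tyd_fs] := styd_fs; have /stydP[_ G2 _ _ tyd_gs] := styd_gs.
have /stydP[_ H2 _ _ tyd_hs] := styd_hs; rewrite /= in F2 G2 H2 tyd_fs tyd_gs tyd_hs.
have assoc_s : scomp (scomp (ga, hs) (be, gs)) (al, fs) = scomp (ga, hs) (scomp (be, gs) (al, fs)).
  apply: (scomp_assoc_lift styd_hs styd_gs styd_fs) => e i lt_i.
  have [dx] : inhabited ty by case: (l1) lt_i => // x _; constructor.
  have lt_ai := styd_index_lt styd_fs lt_i; have lt_bai := styd_index_lt styd_gs lt_ai.
  apply: (IH _ _ _ _ _ _ _ _ (tyd_hs e dx _ lt_bai) (tyd_gs e dx _ lt_ai) (tyd_fs e dx _ lt_i)).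
  have := rsize_nth_sum e F2 lt_i.
  have := rsize_nth_sum e G2 lt_ai.
  have := rsize_nth_sum e H2 lt_bai.
  lia.
rewrite !rcomp_arr -!surjective_pairing assoc_s; congr (rArr _ _ _).
by apply: (IH _ _ _ _ _ _ _ _ tyd_f0 tyd_g0 tyd_h0); lia.
Qed.

Lemma tyd_rid a : tyd (rid a) a a.
Proof.
elim/ty_nested_ind: a => [o|l a IHl IHa]; first by rewrite /= dom_idm cod_idm.
rewrite rid_arr; apply/tyd_arr; rewrite -surjective_pairing; split=> //.
by apply: styd_sid_lift => dx i lt_i; apply: (IHl i); apply: onth_nth_lt.
Qed.

Lemma styd_sid X : styd (sid X) X X.
Proof. by apply: styd_sid_lift => dx i _; apply: tyd_rid. Qed.

Lemma styd_scomp p q X Y Z : styd p X Y -> styd q Y Z -> styd (scomp p q) X Z.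
Proof.
move=> styd_p styd_q; apply: (styd_scomp_lift styd_p styd_q) => d dx i lt_i.
have /stydP[_ _ _ _ tyd_p] := styd_p; have /stydP[_ _ _ _ tyd_q] := styd_q.
exact: tyd_rcomp (tyd_p d dx _ (styd_index_lt styd_q lt_i)) (tyd_q d dx _ lt_i).
Qed.

Lemma scomp_assoc p q r X Y Z W : styd p X Y -> styd q Y Z -> styd r Z W ->
  scomp (scomp p q) r = scomp p (scomp q r).
Proof.
move=> styd_p styd_q styd_r; apply: (scomp_assoc_lift styd_p styd_q styd_r) => d i lt_i.
have /stydP[_ _ _ _ tyd_p] := styd_p; have /stydP[_ _ _ _ tyd_q] := styd_q.
have /stydP[_ _ _ _ tyd_r] := styd_r.
have [dx] : inhabited ty by case: (W) lt_i => // x _; constructor.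
have lt_ri := styd_index_lt styd_r lt_i.
have lt_qri := styd_index_lt styd_q lt_ri.
exact: rcomp_assoc (tyd_p d dx _ lt_qri) (tyd_q d dx _ lt_ri) (tyd_r d dx _ lt_i).
Qed.

Lemma scomp_idl p X Y : styd p X Y -> scomp (sid X) p = p.
Proof.
move=> styd_p; apply: (scomp_idl_lift styd_p) => d dx i lt_i.
by have /stydP[_ _ _ _ tyd_p] := styd_p; apply: rcomp_idl (tyd_p d dx i lt_i).
Qed.

Lemma scomp_idr p X Y : styd p X Y -> scomp p (sid Y) = p.
Proof.
move=> styd_p; apply: (scomp_idr_lift styd_p) => d dx i lt_i.
by have /stydP[_ _ _ _ tyd_p] := styd_p; apply: rcomp_idr (tyd_p d dx i lt_i).
Qed.

Local Notation ctyd := (@ctyd A C).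
Local Notation ccomp := (@ccomp A).
Local Notation cid := (@cid A).
Local Notation s0 := (@s0 A).

Lemma size_ccomp e th : size (ccomp e th) = minn (size e) (size th).
Proof. by rewrite size_map size_zip. Qed.

Lemma nth_ccomp e th p : p < size e -> size e = size th ->
  nth s0 (ccomp e th) p = scomp (nth s0 e p) (nth s0 th p).
Proof. by move=> lt_p eq_sz; rewrite (nth_map (s0, s0)) ?size_zip -?eq_sz ?minnn // nth_zip. Qed.

Lemma size_cid D : size (cid D) = size D.
Proof. exact: size_map. Qed.

Lemma nth_cid D p : p < size D -> nth s0 (cid D) p = sid (nth [::] D p).
Proof. exact: nth_map. Qed.

Lemma ctyd_ccomp e th D1 D2 D3 : ctyd e D1 D2 -> ctyd th D2 D3 -> ctyd (ccomp e th) D1 D3.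
Proof.
move=> [E1 [E2 styd_e]] [T1 [T2 styd_th]]; split; last split.
- by rewrite size_ccomp E1 T1 E2 minnn.
- by rewrite T2 E2.
- move=> p lt_p; rewrite nth_ccomp ?E1 ?T1 ?E2 //.
  by apply: styd_scomp (styd_e _ lt_p) (styd_th _ _); rewrite E2.
Qed.

Lemma ccomp_assoc e th k D1 D2 D3 D4 : ctyd e D1 D2 -> ctyd th D2 D3 -> ctyd k D3 D4 ->
  ccomp (ccomp e th) k = ccomp e (ccomp th k).
Proof.
move=> [E1 [E2 styd_e]] [T1 [T2 styd_th]] [K1 [K2 styd_k]].
have sz : size (ccomp (ccomp e th) k) = size D1 by rewrite !size_ccomp E1 T1 K1 T2 E2 !minnn.
apply: (eq_from_nth (x0 := s0)); first by rewrite sz !size_ccomp E1 T1 K1 T2 E2 !minnn.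
rewrite sz => p lt_p; have lt_p2 : p < size D2 by rewrite E2.
have lt_p3 : p < size D3 by rewrite T2.
rewrite !nth_ccomp ?size_ccomp ?E1 ?T1 ?K1 ?T2 ?E2 ?K2 ?minnn //.
exact: scomp_assoc (styd_e _ lt_p) (styd_th _ lt_p2) (styd_k _ lt_p3).
Qed.

Lemma ctyd_cid D : ctyd (cid D) D D.
Proof. by split; [rewrite size_cid | split=> // p lt_p; rewrite nth_cid //; apply: styd_sid]. Qed.

Lemma ccomp_idl e D D' : ctyd e D D' -> ccomp (cid D) e = e.
Proof.
move=> [E1 [E2 styd_e]]; apply: (eq_from_nth (x0 := s0)).
  by rewrite size_ccomp size_cid E1 minnn.
rewrite size_ccomp size_cid E1 minnn => p lt_p.
by rewrite nth_ccomp ?size_cid ?E1 // nth_cid // (scomp_idl (styd_e _ lt_p)).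
Qed.

Lemma ccomp_idr e D D' : ctyd e D D' -> ccomp e (cid D') = e.
Proof.
move=> [E1 [E2 styd_e]]; apply: (eq_from_nth (x0 := s0)).
  by rewrite size_ccomp size_cid E1 E2 minnn.
rewrite size_ccomp size_cid E1 E2 minnn => p lt_p.
by rewrite nth_ccomp ?size_cid ?E1 ?E2 // nth_cid ?E2 // (scomp_idr (styd_e _ lt_p)).
Qed.

Lemma ctyd_rcons e D D' p l l' : ctyd e D D' -> styd p l l' ->
  ctyd (rcons e p) (rcons D l) (rcons D' l').
Proof.
move=> [E1 [E2 styd_e]] styd_p; split; last split; rewrite ?size_rcons ?E1 ?E2 //.
move=> q; rewrite ltnS leq_eqVlt => /orP [/eqP ->|lt_q].
  by rewrite !nth_rcons E1 E2 !ltnn !eqxx.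
by rewrite !nth_rcons E1 E2 lt_q; apply: styd_e.
Qed.

Lemma ccomp_rcons e th p q : size e = size th ->
  ccomp (rcons e p) (rcons th q) = rcons (ccomp e th) (scomp p q).
Proof. by move=> eq_sz; rewrite /Defs.ccomp zip_rcons // map_rcons. Qed.

Lemma cid_rcons D l : cid (rcons D l) = rcons (cid D) (sid l).
Proof. exact: map_rcons. Qed.

Local Notation unitmor := (@unitmor A).
Local Notation unitctx := (@unitctx A).

Lemma ctyd_unitmor n i f a b : tyd f a b -> ctyd (unitmor n i f) (unitctx n i a) (unitctx n i b).
Proof.
move=> tyd_f; split; last split; rewrite ?size_map // size_iota => p lt_p.
rewrite !(nth_map 0) ?size_iota // nth_iota //=.
case: (p == i); apply/stydP; split=> //=; try by rewrite /Defs.inC; case: C.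
by move=> d dx [|j].
Qed.

Lemma unitmor_rid n i a : unitmor n i (rid a) = cid (unitctx n i a).
Proof. by rewrite /Defs.cid -map_comp; apply: eq_map => p /=; case: (p == i). Qed.

End Morphisms.

Section Derivations.
Variables (A : smallcat) (C : cls).
Local Notation ty := (ty A).
Local Notation rid := (@rid A).
Local Notation sid := (@sid A).
Local Notation cid := (@cid A).
Local Notation tyd := (@tyd A C).
Local Notation ctyd := (@ctyd A C).
Local Notation der_ok := (@der_ok A C).
Local Notation ract := (@ract A).
Local Notation lact := (@lact A).

Lemma tyd_arr_sid l g a b :
  tyd g a b -> tyd (rArr (iota 0 (size l)) (map rid l) g) (arr l a) (arr l b).
Proof. by move=> tyd_g; apply/tyd_arr; split=> //; apply: styd_sid. Qed.

Lemma ract_ok xs D M a p e D' : der_ok xs D M a p -> ctyd e D' D -> der_ok xs D' M a (ract e p).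
Proof.
move=> ok_p; elim: ok_p e D' => {xs D M a p}.
- by move=> xs D x a fs x_xs ctyd_fs e D' ctyd_e; apply: okVar (ctyd_ccomp ctyd_e ctyd_fs).
- move=> xs D x M l a p _ IH e D' ctyd_e; apply/okAbs/IH.
  exact: ctyd_rcons ctyd_e (styd_sid C l).
- move=> xs D M N a as_ Gs p0 ps th sz_Gs all_Gs ok_p0 _ sz_ps ok_ps _ ctyd_th e D' ctyd_e.
  exact: okApp (ctyd_ccomp ctyd_e ctyd_th).
Qed.

Lemma lact_ok xs D M a p g b :
  der_ok xs D M a p -> tyd g a b -> der_ok xs D M b (lact xs D M b g p).
Proof.
move=> ok_p; elim: ok_p g b => {xs D M a p}.
- move=> xs D x a fs x_xs ctyd_fs g b tyd_g.
  exact: okVar (ctyd_ccomp ctyd_fs (ctyd_unitmor _ _ tyd_g)).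
- move=> xs D x M l a p _ IH g b /tyd_arr_inv [al [gs [g' [l' [b' [-> -> tyd_g' styd_gs]]]]]] /=.
  exact/okAbs/(ract_ok (IH _ _ tyd_g'))/(ctyd_rcons (ctyd_cid C D) styd_gs).
- move=> xs D M N a as_ Gs p0 ps th sz_Gs all_Gs _ IH0 sz_ps ok_ps _ ctyd_th g b tyd_g /=.
  apply: okApp => //; first exact/IH0/tyd_arr_sid.
  by move=> i lt_i; rewrite (set_nth_default a) //; apply: ok_ps.
Qed.

Lemma ract_comp xs D M a p e' D' e D'' : der_ok xs D M a p -> ctyd e' D' D -> ctyd e D'' D' ->
  ract e (ract e' p) = ract (ccomp e e') p.
Proof.
move=> ok_p; elim: ok_p e' D' e D'' => {xs D M a p}.
- move=> xs D x a fs _ ctyd_fs e' D' e D'' ctyd_e' ctyd_e /=.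
  by rewrite (ccomp_assoc ctyd_e ctyd_e' ctyd_fs).
- move=> xs D x M l a p _ IH e' D' e D'' ctyd_e' ctyd_e /=.
  rewrite (IH _ _ _ _ (ctyd_rcons ctyd_e' (styd_sid C l)) (ctyd_rcons ctyd_e (styd_sid C l))).
  have [sz_e' _] := ctyd_e'; have [sz_e [sz_D' _]] := ctyd_e.
  by rewrite ccomp_rcons ?sz_e ?sz_e' ?sz_D' // (scomp_idl (styd_sid C l)).
- move=> xs D M N a as_ Gs p0 ps th _ _ _ _ _ _ _ ctyd_th e' D' e D'' ctyd_e' ctyd_e /=.
  by rewrite (ccomp_assoc ctyd_e ctyd_e' ctyd_th).
Qed.

Lemma ract_id xs D M a p : der_ok xs D M a p -> ract (cid D) p = p.
Proof.
elim=> {xs D M a p}.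
- by move=> xs D x a fs _ ctyd_fs /=; rewrite (ccomp_idl ctyd_fs).
- by move=> xs D x M l a p _ IH /=; rewrite -cid_rcons IH.
- by move=> xs D M N a as_ Gs p0 ps th _ _ _ _ _ _ _ ctyd_th /=; rewrite (ccomp_idl ctyd_th).
Qed.

Lemma lact_ract xs D M a p e D' g b : der_ok xs D M a p -> ctyd e D' D -> tyd g a b ->
  lact xs D' M b g (ract e p) = ract e (lact xs D M b g p).
Proof.
move=> ok_p; elim: ok_p e D' g b => {xs D M a p}.
- move=> xs D x a fs _ ctyd_fs e D' g b ctyd_e tyd_g /=.
  by rewrite (ccomp_assoc ctyd_e ctyd_fs (ctyd_unitmor _ _ tyd_g)).
- move=> xs D x M l a p ok_p IH e D' g b ctyd_e.
  case/tyd_arr_inv => al [gs [g' [l' [b' [-> -> tyd_g' styd_gs]]]]] /=.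
  have ctyd_e1 := ctyd_rcons ctyd_e (styd_sid C l).
  have ok_gp := lact_ok ok_p tyd_g'.
  rewrite (IH _ _ _ _ ctyd_e1 tyd_g').
  rewrite (ract_comp ok_gp ctyd_e1 (ctyd_rcons (ctyd_cid C D') styd_gs)).
  rewrite (ract_comp ok_gp (ctyd_rcons (ctyd_cid C D) styd_gs) (ctyd_rcons ctyd_e (styd_sid C l'))).
  have [sz_e [sz_D _]] := ctyd_e.
  rewrite !ccomp_rcons ?size_cid ?sz_e ?sz_D //.
  by rewrite (ccomp_idl ctyd_e) (ccomp_idr ctyd_e) (scomp_idr styd_gs) (scomp_idl styd_gs).
- by [].
Qed.

Lemma lact_id xs D M a p : der_ok xs D M a p -> lact xs D M a (rid a) p = p.
Proof.
elim=> {xs D M a p}.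
- by move=> xs D x a fs _ ctyd_fs /=; rewrite unitmor_rid (ccomp_idr ctyd_fs).
- by move=> xs D x M l a p ok_p IH; rewrite rid_arr /= IH -cid_rcons (ract_id ok_p).
- by move=> xs D M N a as_ Gs p0 ps th _ _ _ IH0 _ _ _ _ /=; rewrite -rid_arr IH0.
Qed.

End Derivations.

Section Translation.
Variables (A : smallcat) (C : cls).
Local Notation ty := (ty A).
Local Notation ctx := (ctx A).
Local Notation deriv := (deriv A).
Local Notation d0 := (d0 A).
Local Notation sem := (sem A C).
Local Notation sem_el xs M := (@el A (sem xs M)).
Local Notation sem_eqv xs M := (@eqv A (sem xs M)).
Local Notation sem_act xs M := (@act A (sem xs M)).
Local Notation tyd := (@tyd A C).
Local Notation ctyd := (@ctyd A C).
Local Notation der_ok := (@der_ok A C).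
Local Notation cong := (@cong A C).

(* [xs] and [M] are not determined by [car (sem xs M)], so they must stay explicit. *)
Unset Implicit Arguments.

Fixpoint to_deriv (xs : seq nat) (M : term) : ctx -> ty -> car (sem xs M) -> deriv :=
  match M return ctx -> ty -> car (sem xs M) -> deriv with
  | Var x => fun D a g => dVar g
  | Lam x M' => fun D a m =>
      if a is arr l b then dAbs l (to_deriv (rcons xs x) M' (rcons D l) b m) else d0
  | App M1 N => fun D a (y : appd A (car (sem xs M1)) (car (sem xs N))) =>
      let: AppD as_ Gs m ns th := y in
      dApp as_ Gs (to_deriv xs M1 (nth [::] Gs 0) (arr as_ a) m)
        [seq to_deriv xs N (nth [::] Gs i.+1) (nth a as_ i) (nth (dflt (sem xs N)) ns i)
        | i <- iota 0 (size as_)] th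
  end.

Fixpoint of_deriv (xs : seq nat) (M : term) : ctx -> ty -> deriv -> car (sem xs M) :=
  match M return ctx -> ty -> deriv -> car (sem xs M) with
  | Var x => fun D a p => if p is dVar fs then fs else [::]
  | Lam x M' => fun D a p =>
      match a, p with
      | arr l b, dAbs _ p' => of_deriv (rcons xs x) M' (rcons D l) b p'
      | _, _ => dflt (sem (rcons xs x) M')
      end
  | App M1 N => fun D a p =>
      if p is dApp as_ Gs p0 ps th then
        AppD as_ Gs (of_deriv xs M1 (nth [::] Gs 0) (arr as_ a) p0)
          [seq of_deriv xs N (nth [::] Gs i.+1) (nth a as_ i) (nth d0 ps i)
          | i <- iota 0 (size as_)] th
      else AppD [::] [::] (dflt (sem xs M1)) [::] [::]
  end.

Set Implicit Arguments.

Lemma to_deriv_ok xs M D a x : sem_el xs M D a x -> der_ok xs D M a (to_deriv xs M D a x).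
Proof.
elim: M xs D a x => [x|x M IH|M IHM N IHN] xs D a.
- by move=> g [x_xs ctyd_g]; apply: okVar.
- by case: a => [//|l b] m el_m; apply/okAbs/IH.
- case=> as_ Gs m ns th [sz_Gs [all_Gs [el_m [sz_ns [el_ns ctyd_th]]]]].
  apply: okApp; rewrite ?size_map ?size_iota => //; first exact: IHM.
  by move=> i lt_i; rewrite nth_map_iota //; apply/IHN/el_ns.
Qed.

Lemma of_deriv_el xs D M a p : der_ok xs D M a p -> sem_el xs M D a (of_deriv xs M D a p).
Proof.
elim=> {xs D M a p} [xs D x a fs x_xs ctyd_fs //|xs D x M l a p _ IH //|].
move=> xs D M N a as_ Gs p0 ps th sz_Gs all_Gs _ IH0 sz_ps _ IHs ctyd_th.
do !split=> //; first by rewrite size_map size_iota.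
by move=> i lt_i; rewrite nth_map_iota //; apply: IHs.
Qed.

Lemma of_to_deriv xs M D a x : sem_el xs M D a x -> of_deriv xs M D a (to_deriv xs M D a x) = x.
Proof.
elim: M xs D a x => [x|x M IH|M IHM N IHN] xs D a //.
- by case: a => [//|l b] m /IH.
- case=> as_ Gs m ns th [_ [_ [el_m [sz_ns [el_ns _]]]]] /=; rewrite IHM //.
  congr (AppD _ _ _ _ _); rewrite -[RHS](mkseq_nth (dflt (sem xs N))) sz_ns.
  by apply/eq_in_map => i /mem_iota0_lt lt_i; rewrite nth_map_iota // IHN //; apply: el_ns.
Qed.

Lemma to_of_deriv xs D M a p : der_ok xs D M a p -> to_deriv xs M D a (of_deriv xs M D a p) = p.
Proof.
elim=> {xs D M a p} [//|xs D x M l a p _ IH /=|]; first by rewrite IH.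
move=> xs D M N a as_ Gs p0 ps th _ _ _ IH0 sz_ps _ IHs _ /=; rewrite IH0.
congr (dApp _ _ _ _ _); rewrite -[RHS](mkseq_nth d0) sz_ps.
by apply/eq_in_map => i /mem_iota0_lt lt_i; rewrite nth_map_iota // IHs.
Qed.

Lemma sem_act_el xs M D a D' a' e f x : ctyd e D' D -> tyd f a a' ->
  sem_el xs M D a x -> sem_el xs M D' a' (sem_act xs M D a D' a' e f x).
Proof.
elim: M xs D a D' a' e f x => [x|x M IH|M IHM N IHN] xs D a D' a' e f.
- move=> g ctyd_e tyd_f [x_xs ctyd_g]; split=> //.
  exact: ctyd_ccomp ctyd_e (ctyd_ccomp ctyd_g (ctyd_unitmor _ _ tyd_f)).
- case: a => [//|l b] m ctyd_e /tyd_arr_inv [al [gs [g [l' [b' [-> -> tyd_g styd_gs]]]]]] /=.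
  exact/IH/tyd_g/ctyd_rcons.
- case=> as_ Gs m ns th ctyd_e tyd_f [sz_Gs [all_Gs [el_m [sz_ns [el_ns ctyd_th]]]]].
  split=> //; split=> //; split; first exact: IHM (ctyd_cid C _) (tyd_arr_sid as_ tyd_f) el_m.
  split=> //; split; last exact: ctyd_ccomp ctyd_e ctyd_th.
  by move=> i lt_i; rewrite (set_nth_default a) //; apply: el_ns.
Qed.

Lemma to_deriv_act xs M D a D' a' e f x : ctyd e D' D -> tyd f a a' -> sem_el xs M D a x ->
  to_deriv xs M D' a' (sem_act xs M D a D' a' e f x) =
  lact xs D' M a' f (ract e (to_deriv xs M D a x)).
Proof.
elim: M xs D a D' a' e f x => [x|x M IH|M IHM N IHN] xs D a D' a' e f.
- move=> g ctyd_e tyd_f [_ ctyd_g] /=.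
  by rewrite (ccomp_assoc ctyd_e ctyd_g (ctyd_unitmor _ _ tyd_f)).
- case: a => [//|l b] m ctyd_e /tyd_arr_inv [al [gs [g [l' [b' [-> -> tyd_g styd_gs]]]]]] /= el_m.
  have ctyd_e1 : ctyd (rcons e (al, gs)) (rcons D' l') (rcons D l) by apply: ctyd_rcons.
  have ctyd_e2 := ctyd_rcons ctyd_e (styd_sid C l).
  have ok_m := to_deriv_ok el_m.
  rewrite (IH _ _ _ _ _ _ _ _ ctyd_e1 tyd_g el_m) (lact_ract ok_m ctyd_e1 tyd_g).
  rewrite (lact_ract ok_m ctyd_e2 tyd_g).
  rewrite (ract_comp (lact_ok ok_m tyd_g) ctyd_e2 (ctyd_rcons (ctyd_cid C D') styd_gs)).
  have [sz_e [sz_D _]] := ctyd_e.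
  by rewrite ccomp_rcons ?size_cid ?sz_e ?sz_D // (ccomp_idl ctyd_e) (scomp_idr styd_gs).
- case=> as_ Gs m ns th ctyd_e tyd_f [_ [_ [el_m [_ [_ _]]]]] /=.
  rewrite (IHM _ _ _ _ _ _ _ _ (ctyd_cid C _) (tyd_arr_sid as_ tyd_f) el_m).
  rewrite (ract_id (to_deriv_ok el_m)); congr (dApp _ _ _ _ _).
  by apply/eq_in_map => i /mem_iota0_lt lt_i; rewrite (set_nth_default a).
Qed.

Lemma of_deriv_act xs M D a D' a' e f p : der_ok xs D M a p -> ctyd e D' D -> tyd f a a' ->
  of_deriv xs M D' a' (lact xs D' M a' f (ract e p)) =
  sem_act xs M D a D' a' e f (of_deriv xs M D a p).
Proof.
move=> ok_p ctyd_e tyd_f; have el_p := of_deriv_el ok_p.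
rewrite -{1}(to_of_deriv ok_p) -(to_deriv_act ctyd_e tyd_f el_p).
exact/of_to_deriv/sem_act_el.
Qed.

Lemma sem_eqv_refl xs M D a x : sem_el xs M D a x -> sem_eqv xs M D a x x.
Proof.
elim: M xs D a x => [x|x M IH|M IHM N IHN] xs D a; first by [].
- by case: a => [//|l b] m /IH.
- exact: ae_refl.
Qed.

Lemma sem_eqv_sym xs M D a x y : sem_eqv xs M D a x y -> sem_eqv xs M D a y x.
Proof.
elim: M xs D a x y => [x|x M IH|M IHM N IHN] xs D a.
- by move=> g g' [el_g <-].
- by case: a => [//|l b] m m' /IH.
- exact: ae_sym.
Qed.

Lemma sem_eqv_trans xs M D a x y z :
  sem_eqv xs M D a x y -> sem_eqv xs M D a y z -> sem_eqv xs M D a x z.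
Proof.
elim: M xs D a x y z => [x|x M IH|M IHM N IHN] xs D a.
- by move=> g g' g'' [el_g <-] [_ <-].
- by case: a => [//|l b] m m' m'' /IH; apply.
- exact: ae_trans.
Qed.


Lemma to_deriv_eqv xs M D a x x' :
  sem_eqv xs M D a x x' -> cong xs D M a (to_deriv xs M D a x) (to_deriv xs M D a x').
Proof.
elim: M xs D a x x' => [x|x M IH|M IHM N IHN] xs D a.
- by move=> g g' [[x_xs ctyd_g] <-]; apply/c_refl/okVar.
- by case: a => [//|l b] m m' /IH; apply: c_abs.
have cong_eq p q p' q' : cong xs D (App M N) a p q -> p = p' -> q = q' ->
    cong xs D (App M N) a p' q' by move=> ? <- <-.
move=> y y' eqv_y; have {eqv_y} : @app_eqv A C (size xs) (sem xs M) (sem xs N) D a y y' := eqv_y.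
elim=> {y y'}.
- by move=> y el_y; apply/c_refl/(@to_deriv_ok xs (App M N)).
- by move=> y y' _; apply: c_sym.
- by move=> y y' y'' _ + _; apply: c_trans.
- move=> as_ Gs m m' ns ns' th el_y el_y' eqv_m eqv_ns.
  apply: c_app; rewrite ?size_map ?size_iota //.
  + exact: (@to_deriv_ok xs (App M N) D a _ el_y).
  + exact: (@to_deriv_ok xs (App M N) D a _ el_y').
  + exact: IHM.
  + by move=> i lt_i; rewrite !nth_map_iota //; apply/IHN/eqv_ns.
- move=> as_ bs G0 Gs al fs m ns e styd_fs sz_Gs all_Gs el_m sz_ns el_ns ctyd_e.
  have /stydP[sz_al _ _ _ tyd_fs] := styd_fs; rewrite /= in sz_al tyd_fs.
  pose ps := [seq to_deriv xs N (nth [::] Gs i) (nth a as_ i) (nth (dflt (sem xs N)) ns i)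
             | i <- iota 0 (size as_)].
  have ok_ps i : i < size as_ -> der_ok xs (nth [::] Gs i) N (nth a as_ i) (nth d0 ps i).
    by move=> lt_i; rewrite nth_map_iota //; apply/to_deriv_ok/el_ns.
  have tyd_f : tyd (rArr al fs (rid a)) (arr bs a) (arr as_ a).
    by apply/tyd_arr; split; [apply: tyd_rid | apply: styd_fs].
  have sz_ps : size ps = size as_ by rewrite size_map size_iota.
  apply/c_sym/cong_eq; first exact: c_i styd_fs sz_Gs all_Gs (to_deriv_ok el_m) sz_ps ok_ps ctyd_e.
  + rewrite /=; congr (dApp _ _ _ _ _); apply/eq_in_map => i /mem_iota0_lt lt_i.
    have lt_ai : nth 0 al i < size as_ := styd_index_lt styd_fs lt_i.
    have el_n := el_ns _ lt_ai.
    rewrite (nth_map 0) ?sz_al // !nth_map_iota //.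
    by rewrite (to_deriv_act (ctyd_cid C _) (tyd_fs _ a i lt_i) el_n) (ract_id (to_deriv_ok el_n)).
  + by rewrite /= (to_deriv_act (ctyd_cid C G0) tyd_f el_m) (ract_id (to_deriv_ok el_m)).
- move=> as_ Gs Gs' ths m ns e sz_Gs sz_Gs' sz_ths all_Gs all_Gs' ctyd_ths el_m sz_ns el_ns ctyd_e.
  pose ps := [seq to_deriv xs N (nth [::] Gs' i.+1) (nth a as_ i) (nth (dflt (sem xs N)) ns i)
             | i <- iota 0 (size as_)].
  have sz_ps : size ps = size as_ by rewrite size_map size_iota.
  have ok_ps i : i < size as_ -> der_ok xs (nth [::] Gs' i.+1) N (nth a as_ i) (nth d0 ps i).
    by move=> lt_i; rewrite nth_map_iota //; apply/to_deriv_ok/el_ns.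
  apply/cong_eq; last by [].
    exact: c_ii sz_Gs sz_Gs' sz_ths all_Gs all_Gs' ctyd_ths (to_deriv_ok el_m) sz_ps ok_ps ctyd_e.
  rewrite /=; congr (dApp _ _ _ _ _).
  + have ctyd_th0 : ctyd (nth [::] ths 0) (nth [::] Gs 0) (nth [::] Gs' 0).
      by apply: ctyd_ths; rewrite sz_Gs.
    rewrite (to_deriv_act ctyd_th0 (tyd_rid C _) el_m).
    by rewrite (lact_id (ract_ok (to_deriv_ok el_m) ctyd_th0)).
  + apply/eq_in_map => i /mem_iota0_lt lt_i.
    have ctyd_thi : ctyd (nth [::] ths i.+1) (nth [::] Gs i.+1) (nth [::] Gs' i.+1).
      by apply: ctyd_ths; rewrite sz_Gs.
    rewrite !nth_map_iota // (to_deriv_act ctyd_thi (tyd_rid C _) (el_ns i lt_i)).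
    by rewrite (lact_id (ract_ok (to_deriv_ok (el_ns i lt_i)) ctyd_thi)).
Qed.


Lemma of_deriv_cong xs D M a p q :
  cong xs D M a p q -> sem_eqv xs M D a (of_deriv xs M D a p) (of_deriv xs M D a q).
Proof.
elim=> {xs D M a p q}.
- by move=> xs D M a p /of_deriv_el /sem_eqv_refl.
- by move=> xs D M a p q _ /sem_eqv_sym.
- by move=> xs D M a p q r _ + _; apply: sem_eqv_trans.
- by [].
- move=> xs D M N a as_ Gs p0 p0' ps ps' e ok_p ok_p' _ eqv_p0 _ eqv_ps.
  apply: ae_cmp; [exact: (of_deriv_el ok_p) | exact: (of_deriv_el ok_p') | exact: eqv_p0 |].
  by move=> i lt_i; rewrite !nth_map_iota //; apply: eqv_ps.
- move=> xs D M N a as_ bs G0 Gs al fs p0 ps e styd_fs sz_Gs all_Gs ok_p0 sz_ps ok_ps ctyd_e.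
  have eqv_eq y z y' z' : sem_eqv xs (App M N) D a y z -> y = y' -> z = z' ->
    sem_eqv xs (App M N) D a y' z' by move=> ? <- <-.
  have /stydP[sz_al _ _ _ tyd_fs] := styd_fs; rewrite /= in sz_al tyd_fs.
  pose ns := [seq of_deriv xs N (nth [::] Gs i) (nth a as_ i) (nth d0 ps i)
             | i <- iota 0 (size as_)].
  have sz_ns : size ns = size as_ by rewrite size_map size_iota.
  have el_ns i : i < size as_ ->
      sem_el xs N (nth [::] Gs i) (nth a as_ i) (nth (dflt (sem xs N)) ns i).
    by move=> lt_i; rewrite nth_map_iota //; apply/of_deriv_el/ok_ps.
  have tyd_f : tyd (rArr al fs (rid a)) (arr bs a) (arr as_ a).
    by apply/tyd_arr; split; [apply: tyd_rid | apply: styd_fs].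
  apply/sem_eqv_sym/eqv_eq.
    exact: ae_i styd_fs sz_Gs all_Gs (of_deriv_el ok_p0) sz_ns el_ns ctyd_e.
  + by rewrite /= -{2}(ract_id ok_p0) (of_deriv_act ok_p0 (ctyd_cid C G0) tyd_f).
  + rewrite /=; congr (AppD _ _ _ _ _); apply/eq_in_map => i /mem_iota0_lt lt_i.
    have lt_ai : nth 0 al i < size as_ := styd_index_lt styd_fs lt_i.
    rewrite (nth_map 0) ?sz_al // !nth_map_iota // -{2}(ract_id (ok_ps _ lt_ai)).
    by rewrite (of_deriv_act (ok_ps _ lt_ai) (ctyd_cid C _) (tyd_fs (rid a) a i lt_i)).
- move=> xs D M N a as_ Gs Gs' ths p0 ps e sz_Gs sz_Gs' sz_ths all_Gs all_Gs' ctyd_ths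
    ok_p0 sz_ps ok_ps ctyd_e.
  have eqv_eq y z y' z' : sem_eqv xs (App M N) D a y z -> y = y' -> z = z' ->
    sem_eqv xs (App M N) D a y' z' by move=> ? <- <-.
  pose ns := [seq of_deriv xs N (nth [::] Gs' i.+1) (nth a as_ i) (nth d0 ps i)
             | i <- iota 0 (size as_)].
  have sz_ns : size ns = size as_ by rewrite size_map size_iota.
  have el_ns i : i < size as_ ->
      sem_el xs N (nth [::] Gs' i.+1) (nth a as_ i) (nth (dflt (sem xs N)) ns i).
    by move=> lt_i; rewrite nth_map_iota //; apply/of_deriv_el/ok_ps.
  apply/eqv_eq; last by [].
    exact: ae_ii sz_Gs sz_Gs' sz_ths all_Gs all_Gs' ctyd_ths (of_deriv_el ok_p0) sz_ns el_ns ctyd_e.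
  rewrite /=; congr (AppD _ _ _ _ _).
  + have ctyd_th0 : ctyd (nth [::] ths 0) (nth [::] Gs 0) (nth [::] Gs' 0).
      by apply: ctyd_ths; rewrite sz_Gs.
    by rewrite -(lact_id (ract_ok ok_p0 ctyd_th0)) (of_deriv_act ok_p0 ctyd_th0 (tyd_rid C _)).
  + apply/eq_in_map => i /mem_iota0_lt lt_i.
    have ctyd_thi : ctyd (nth [::] ths i.+1) (nth [::] Gs i.+1) (nth [::] Gs' i.+1).
      by apply: ctyd_ths; rewrite sz_Gs.
    rewrite !nth_map_iota // -(lact_id (ract_ok (ok_ps i lt_i) ctyd_thi)).
    by rewrite (of_deriv_act (ok_ps i lt_i) ctyd_thi (tyd_rid C _)).
Qed.

End Translation.

Theorem theorem3 (A : smallcat) (C : cls) (M : term) (xs : seq nat) :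
  uniq xs -> {subset fv M <= xs} -> nat_iso C (sem A C xs M) (TD A C xs M).
Proof.
move=> _ _; exists (to_deriv A C xs M), (of_deriv A C xs M).
split; first by move=> D a x; apply: to_deriv_ok.
split; first by move=> D a p; apply: of_deriv_el.
split; first by move=> D a x x'; apply: to_deriv_eqv.
split; first by move=> D a p p'; apply: of_deriv_cong.
split; first by move=> D a x el_x; rewrite of_to_deriv //; apply: sem_eqv_refl.
split; first by move=> D a p ok_p; rewrite to_of_deriv //; apply: c_refl.
move=> D a D' a' e f x ctyd_e tyd_f el_x; rewrite /= to_deriv_act //.
exact/c_refl/(lact_ok _ tyd_f)/(ract_ok _ ctyd_e)/to_deriv_ok.
Qed.
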